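(* For every integer $n\ge 1$ we have $I(T_n)=12n-4$ and $|V_{T_n}|=12n$.
   Context: The vertex set $V$ consists of all reduced fractions $p/q$ ($\gcd(p,q)=1$) together with $1/0$, with $p/q=(-p)/(-q)$, identified with $\mathbb Q\cup\{\infty\}\subset\partial_\infty\mathbb H$; $d(p/q,a/b)=|pb-qa|$. The Farey tessellation of $\mathbb H$ consists of the ideal triangles whose three vertices in $V$ pairwise have $d=1$. The dual graph $\mathcal G$ is the trivalent tree with one vertex per ideal triangle and one edge for each pair of triangles sharing a side (dual to that side). For $c\in V$, $H_c\subset\mathcal G$ is the bi-infinite path formed by the edges of $\mathcal G$ dual to Farey edges having $c$ as an endpoint. For a finite subgraph $K\subset\mathcal G$, $V_K=\{c\in V: H_c\cap K \text{ is neither empty nor a single point}\}$ and $I(K)=\max\{d(c,c'): c,c'\in V_K\}$. Construction of $T_n$: take an embedded path $P$ of $7n-1$ edges contained in some $H_c$, with non-endpoint vertices numbered in order $1,\dots,7n-2$. Let $J_1=\{1,\dots,2n-1\}\cup\{5n,\dots,7n-2\}$, $J_2=\{2n,\dots,3n-1\}\cup\{4n,\dots,5n-1\}$, $J_3=\{3n,\dots,4n-1\}$. For a non-endpoint vertex $v$ of $P$ and $r\ge1$, let $B_r(v)$ be the set of edges of $\mathcal G$ lying on some path of length at most $r$ in $\mathcal G$ that starts at $v$ with the unique edge at $v$ not in $P$ and never returns to $v$ (so $|B_1(v)|=1$, $|B_2(v)|=3$, $|B_3(v)|=7$). $T_n$ is the union of $P$ with $B_1(v)$ for $v\in J_1$,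 $B_2(v)$ for $v\in J_2$, and $B_3(v)$ for $v\in J_3$. *)

From Stdlib Require Import ZArith List Lia.
Open Scope Z_scope.

(** Elements of V: reduced fractions p/q, represented by their canonical
    representative (p,q) with gcd(p,q)=1 and q>0, or (1,0) for 1/0.
    This realizes the identification p/q = (-p)/(-q). *)
Definition pt : Type := (Z * Z)%type.

Definition is_vertex (x : pt) : Prop :=
  Z.gcd (fst x) (snd x) = 1 /\ (0 < snd x \/ (snd x = 0 /\ fst x = 1)).

Definition dist (x y : pt) : Z := Z.abs (fst x * snd y - snd x * fst y).

(** Ideal triangles of the Farey tessellation (= vertices of the dual tree G),
    represented by a triple of their vertices (order irrelevant). *)
Definition tri : Type := (pt * pt * pt)%type.

Definition in_tri (x : pt) (t : tri) : Prop :=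
  let '(a, b, e) := t in x = a \/ x = b \/ x = e.

Definition is_tri (t : tri) : Prop :=
  let '(a, b, e) := t in
  is_vertex a /\ is_vertex b /\ is_vertex e /\
  dist a b = 1 /\ dist b e = 1 /\ dist a e = 1.

Definition tri_eq (t u : tri) : Prop := forall x, in_tri x t <-> in_tri x u.

(** Farey edges (= edges of the dual tree G), represented by an (ordered)
    pair of endpoints; (a,b) and (b,a) denote the same edge. *)
Definition side : Type := (pt * pt)%type.

Definition farey_edge (s : side) : Prop :=
  is_vertex (fst s) /\ is_vertex (snd s) /\ dist (fst s) (snd s) = 1.

Definition side_of (s : side) (t : tri) : Prop :=
  in_tri (fst s) t /\ in_tri (snd s) t /\ fst s <> snd s.

Definition has_endpoint (c : pt) (s : side) : Prop := fst s = c \/ snd s = c.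

Definition adjacent (t u : tri) : Prop :=
  is_tri t /\ is_tri u /\ ~ tri_eq t u /\ exists s, side_of s t /\ side_of s u.

(** A subgraph of G given by a set of edges (Farey sides); its vertex set
    consists of the endpoints (triangles) of these edges. *)
Definition subgraph : Type := side -> Prop.

Definition sub_verts (K : subgraph) (t : tri) : Prop :=
  is_tri t /\ exists s, side_of s t /\ K s.

(** The bi-infinite path H_c: edges dual to Farey edges with endpoint c,
    vertices the endpoints of these edges. *)
Definition H_edges (c : pt) (s : side) : Prop := farey_edge s /\ has_endpoint c s.

Definition H_verts (c : pt) (t : tri) : Prop :=
  is_tri t /\ exists s, side_of s t /\ has_endpoint c s.

Definition inter_verts (c : pt) (K : subgraph) (t : tri) : Prop :=
  H_verts c t /\ sub_verts K t.
Definition inter_edges (c : pt) (K : subgraph) (s : side) : Prop :=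
  H_edges c s /\ K s.

Definition inter_empty (c : pt) (K : subgraph) : Prop :=
  (forall t, ~ inter_verts c K t) /\ (forall s, ~ inter_edges c K s).

Definition inter_single_point (c : pt) (K : subgraph) : Prop :=
  (exists t, inter_verts c K t /\ forall t', inter_verts c K t' -> tri_eq t t') /\
  (forall s, ~ inter_edges c K s).

Definition V_of (K : subgraph) (c : pt) : Prop :=
  is_vertex c /\ ~ inter_empty c K /\ ~ inter_single_point c K.

Definition I_is (K : subgraph) (m : Z) : Prop :=
  (exists c c', V_of K c /\ V_of K c' /\ dist c c' = m) /\
  (forall c c', V_of K c -> V_of K c' -> dist c c' <= m).

Definition card_is (A : pt -> Prop) (k : nat) : Prop :=
  exists l : list pt, NoDup l /\ (forall x, In x l <-> A x) /\ length l = k.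

Definition embedded_path_in_H (c : pt) (p : nat -> tri) (m : nat) : Prop :=
  (forall i, (i <= m)%nat -> is_tri (p i)) /\
  (forall i, (i < m)%nat -> adjacent (p i) (p (S i)) /\
     exists s, side_of s (p i) /\ side_of s (p (S i)) /\ has_endpoint c s) /\
  (forall i j, (i < j <= m)%nat -> ~ tri_eq (p i) (p j)).

Definition path_edges (p : nat -> tri) (m : nat) (s : side) : Prop :=
  exists i, (i < m)%nat /\ side_of s (p i) /\ side_of s (p (S i)).

Definition B (p : nat -> tri) (m : nat) (i : nat) (r : nat) (s : side) : Prop :=
  exists (u : nat -> tri) (k : nat),
    (1 <= k <= r)%nat /\ u 0%nat = p i /\
    (forall j, (j < k)%nat -> adjacent (u j) (u (S j))) /\
    (forall j j', (j < j' <= k)%nat -> ~ tri_eq (u j) (u j')) /\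
    (forall s0, side_of s0 (u 0%nat) -> side_of s0 (u 1%nat) -> ~ path_edges p m s0) /\
    (exists j, (j < k)%nat /\ side_of s (u j) /\ side_of s (u (S j))).

Definition J1 (n i : nat) : Prop :=
  ((1 <= i <= 2 * n - 1) \/ (5 * n <= i <= 7 * n - 2))%nat.
Definition J2 (n i : nat) : Prop :=
  ((2 * n <= i <= 3 * n - 1) \/ (4 * n <= i <= 5 * n - 1))%nat.
Definition J3 (n i : nat) : Prop :=
  (3 * n <= i <= 4 * n - 1)%nat.

Definition T (n : nat) (p : nat -> tri) : subgraph := fun s =>
  path_edges p (7 * n - 1) s \/
  (exists i, J1 n i /\ B p (7 * n - 1) i 1 s) \/
  (exists i, J2 n i /\ B p (7 * n - 1) i 2 s) \/
  (exists i, J3 n i /\ B p (7 * n - 1) i 3 s).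

(* A basis (f, g) of Z^2 with det f g = ±1 maps the Farey tessellation onto itself: the
   vertex with coordinates u is the reduced fraction of u1 f + u2 g, and d becomes |det|.
   The two triangles on a Farey edge [a, b] have third vertices ±(a + b) and ±(a - b).
   Choosing f and g = ±c so that the first triangle of P is (f, c, f + g), the path becomes
   P_i = (x_i, c, x_(i+1)) with x_i = f + i g, and every triangle of T_n gets explicit
   coordinates: the branch at v_i is (x_i, x_(i+1), y_i), then (x_i, y_i, z_i) and
   (x_(i+1), y_i, w_i), then the four triangles glued to these, where y_i = x_i + x_(i+1),
   z_i = x_i + y_i and w_i = y_i + x_(i+1).  The endpoints of edges of T_n are c,
   x_1, ..., x_(7n-1), the 3n vertices y_i (2n <= i < 5n) and the 2n vertices z_i, w_i
   (3n <= i < 4n); every other vertex of T_n lies in a single triangle of T_n, so these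
   12n vertices form V_(T_n), and the largest |det| among them is
   det(y_(2n), y_(5n-1)) = 12n - 4. *)

From Stdlib Require Import ZArith List Lia Classical.
Open Scope Z_scope.

(** * Unimodular frames *)

Definition det (u v : Z * Z) : Z := fst u * snd v - snd u * fst v.
Definition unimodular (u v : Z * Z) : Prop := Z.abs (det u v) = 1.
Definition eq_pm (u v : Z * Z) : Prop :=
  (fst u = fst v /\ snd u = snd v) \/ (fst u = - fst v /\ snd u = - snd v).
Definition nonzero (v : Z * Z) : Prop := fst v <> 0 \/ snd v <> 0.
Definition vadd (u v : Z * Z) : Z * Z := (fst u + fst v, snd u + snd v).
Definition vsub (u v : Z * Z) : Z * Z := (fst u - fst v, snd u - snd v).

Definition canon (v : Z * Z) : pt :=
  if ((0 <? snd v) || ((snd v =? 0) && (0 <? fst v)))%bool then v else (- fst v, - snd v).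
Definition comb (f g u : Z * Z) : Z * Z :=
  (fst u * fst f + snd u * fst g, fst u * snd f + snd u * snd g).
Definition vtx (f g u : Z * Z) : pt := canon (comb f g u).

Lemma eq_pm_sym u v : eq_pm u v -> eq_pm v u.
Proof. unfold eq_pm; lia. Qed.

Lemma eq_pm_trans u v w : eq_pm u v -> eq_pm v w -> eq_pm u w.
Proof. unfold eq_pm; lia. Qed.

Lemma canon_cases v : canon v = v \/ canon v = (- fst v, - snd v).
Proof. unfold canon; destruct (_ || _)%bool; auto. Qed.

Lemma canon_vertex x : is_vertex x -> canon x = x.
Proof.
  destruct x as [a b]; unfold is_vertex, canon; simpl; intros [_ H].
  destruct (Z.ltb_spec 0 b), (Z.eqb_spec b 0), (Z.ltb_spec 0 a); simpl; auto; lia.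
Qed.

Lemma canon_inj u v : canon u = canon v -> eq_pm u v.
Proof.
  destruct u as [a b], v as [c d]; unfold eq_pm; simpl.
  destruct (canon_cases (a, b)) as [-> | ->], (canon_cases (c, d)) as [-> | ->];
    simpl; intro E; injection E; lia.
Qed.

Lemma canon_eq_pm u v : eq_pm u v -> nonzero v -> canon u = canon v.
Proof.
  destruct u as [a b], v as [c d]; unfold eq_pm, nonzero, canon; simpl; intros H H'.
  destruct (Z.ltb_spec 0 b), (Z.ltb_spec 0 d), (Z.eqb_spec b 0), (Z.eqb_spec d 0),
    (Z.ltb_spec 0 a), (Z.ltb_spec 0 c); simpl; f_equal; lia.
Qed.

Lemma abs_det_canon u v : Z.abs (det (canon u) (canon v)) = Z.abs (det u v).
Proof.
  unfold det.
  destruct (canon_cases u) as [-> | ->], (canon_cases v) as [-> | ->]; simpl;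
    first [reflexivity | f_equal; ring | rewrite <- Z.abs_opp; f_equal; ring].
Qed.

Lemma is_vertex_canon x y : unimodular x y -> is_vertex (canon x).
Proof.
  intro H.
  assert (G : Z.gcd (fst x) (snd x) = 1).
  { assert (D : (Z.gcd (fst x) (snd x) | det x y)).
    { apply Z.divide_sub_r; apply Z.divide_mul_l;
        [apply Z.gcd_divide_l | apply Z.gcd_divide_r]. }
    apply Z.divide_abs_r in D; unfold unimodular in H; rewrite H in D.
    apply Z.divide_1_r in D.
    pose proof (Z.gcd_nonneg (fst x) (snd x)); lia. }
  destruct x as [a b]; simpl in G; unfold is_vertex, canon; simpl.
  destruct (Z.ltb_spec 0 b), (Z.eqb_spec b 0), (Z.ltb_spec 0 a); simpl;
    rewrite ?Z.gcd_opp_l, ?Z.gcd_opp_r; try subst b; rewrite ?Z.gcd_0_r in *; lia.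
Qed.

Lemma is_vertex_nonzero x : is_vertex x -> nonzero x.
Proof. unfold is_vertex, nonzero; lia. Qed.

Lemma det_comb f g u v : det (comb f g u) (comb f g v) = det u v * det f g.
Proof. unfold det, comb; simpl; ring. Qed.

Lemma comb_fst f g u : fst u * det f g = fst (comb f g u) * snd g - snd (comb f g u) * fst g.
Proof. unfold comb, det; simpl; ring. Qed.

Lemma comb_snd f g u : snd u * det f g = snd (comb f g u) * fst f - fst (comb f g u) * snd f.
Proof. unfold comb, det; simpl; ring. Qed.

Lemma comb_eq_pm f g u v : unimodular f g -> eq_pm (comb f g u) (comb f g v) -> eq_pm u v.
Proof.
  unfold unimodular; intros H [[E1 E2] | [E1 E2]]; [left | right];
    split; apply (Z.mul_cancel_r _ _ (det f g)); try lia;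
    rewrite ?Z.mul_opp_l, ?comb_fst, ?comb_snd, E1, E2; ring.
Qed.

Lemma comb_nonzero f g v : unimodular f g -> nonzero v -> nonzero (comb f g v).
Proof.
  unfold unimodular, nonzero; intros H Nv.
  pose proof (comb_fst f g v) as C1; pose proof (comb_snd f g v) as C2.
  destruct (Z.eq_dec (fst (comb f g v)) 0) as [E1 |]; [| auto].
  destruct (Z.eq_dec (snd (comb f g v)) 0) as [E2 |]; [| auto].
  rewrite E1, E2 in *; nia.
Qed.

Lemma comb_surj f g e : unimodular f g -> exists w, comb f g w = e.
Proof.
  unfold unimodular; intro H; set (d := det f g).
  assert (dd : d * d = 1) by (destruct (Z.abs_spec d); nia).
  exists (det e g * d, det f e * d).
  destruct e as [e1 e2], f as [f1 f2], g as [g1 g2]; unfold comb, det in *; simpl in *.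
  f_equal; [transitivity (e1 * (d * d)) | transitivity (e2 * (d * d))];
    solve [subst d; ring | rewrite dd; ring].
Qed.

Lemma apex_unimodular a b w : unimodular a b -> unimodular a w -> unimodular b w ->
  eq_pm w (vadd a b) \/ eq_pm w (vsub a b).
Proof.
  unfold unimodular, eq_pm; intros H1 H2 H3.
  assert (E1 : det a b * fst w = - det b w * fst a + det a w * fst b) by (unfold det; ring).
  assert (E2 : det a b * snd w = - det b w * snd a + det a w * snd b) by (unfold det; ring).
  revert E1 E2 H1 H2 H3; simpl.
  generalize (det a b) (det b w) (det a w); intros D X Y E1 E2 H1 H2 H3.
  destruct (Z.abs_spec D), (Z.abs_spec X), (Z.abs_spec Y);
    assert (D = 1 \/ D = -1) as [-> | ->] by lia;
    assert (X = 1 \/ X = -1) as [-> | ->] by lia;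
    assert (Y = 1 \/ Y = -1) as [-> | ->] by lia; lia.
Qed.

Section Frame.

Variables f g : Z * Z.
Hypothesis Hfg : unimodular f g.

Lemma dist_vtx u v : dist (vtx f g u) (vtx f g v) = Z.abs (det u v).
Proof.
  unfold dist, vtx; fold (det (canon (comb f g u)) (canon (comb f g v))).
  unfold unimodular in Hfg.
  rewrite abs_det_canon, det_comb, Z.abs_mul, Hfg; ring.
Qed.

Lemma vtx_inj u v : vtx f g u = vtx f g v -> eq_pm u v.
Proof. intro E; apply (comb_eq_pm f g); auto; apply canon_inj; exact E. Qed.

Lemma vtx_eq_pm u v : eq_pm u v -> nonzero v -> vtx f g u = vtx f g v.
Proof.
  intros P NZ; apply canon_eq_pm; [| apply comb_nonzero; auto].
  destruct u, v; unfold eq_pm, comb in *; simpl in *; lia.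
Qed.

Lemma is_vertex_vtx u w : unimodular u w -> is_vertex (vtx f g u).
Proof.
  intro H; apply (is_vertex_canon _ (comb f g w)).
  unfold unimodular in *; rewrite det_comb, Z.abs_mul, H, Hfg; reflexivity.
Qed.

Lemma vtx_surj e : is_vertex e -> exists w, e = vtx f g w.
Proof.
  intro V; destruct (comb_surj f g e Hfg) as [w E]; exists w.
  unfold vtx; rewrite E; symmetry; apply canon_vertex; exact V.
Qed.

Lemma farey_apex a b e : unimodular a b -> is_vertex e ->
  dist (vtx f g a) e = 1 -> dist (vtx f g b) e = 1 ->
  exists w, e = vtx f g w /\ (eq_pm w (vadd a b) \/ eq_pm w (vsub a b)).
Proof.
  intros Hab Ve D1 D2; destruct (vtx_surj e Ve) as [w ->].
  exists w; split; auto.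
  rewrite dist_vtx in D1, D2; apply apex_unimodular; auto.
Qed.

End Frame.

(** * Farey triangles and their coordinates *)

Lemma dist_sym x y : dist x y = dist y x.
Proof. unfold dist; rewrite <- Z.abs_opp; f_equal; ring. Qed.

Lemma tri_eq_sym t u : tri_eq t u -> tri_eq u t.
Proof. unfold tri_eq; intros H x; rewrite H; tauto. Qed.

Lemma tri_eq_trans t u v : tri_eq t u -> tri_eq u v -> tri_eq t v.
Proof. unfold tri_eq; intros H H' x; rewrite H; auto. Qed.

Lemma tri_eq_intro (x y z x' y' z' : pt) :
  in_tri x (x', y', z') -> in_tri y (x', y', z') -> in_tri z (x', y', z') ->
  in_tri x' (x, y, z) -> in_tri y' (x, y, z) -> in_tri z' (x, y, z) ->
  tri_eq (x, y, z) (x', y', z').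
Proof.
  intros Hx Hy Hz Hx' Hy' Hz' w; split; intros [-> | [-> | ->]]; assumption.
Qed.

Lemma side_of_tri_eq s t u : side_of s t -> tri_eq t u -> side_of s u.
Proof. unfold side_of, tri_eq; intros [A [B C]] H; rewrite <- !H; auto. Qed.

Definition joins (s : side) (x y : pt) : Prop :=
  (fst s = x /\ snd s = y) \/ (fst s = y /\ snd s = x).

Lemma side_of_joins s x y t : joins s x y -> in_tri x t -> in_tri y t -> x <> y -> side_of s t.
Proof. unfold joins, side_of; intros [[-> ->] | [-> ->]]; auto. Qed.

Lemma side_apex s u : is_tri u -> side_of s u ->
  exists e, tri_eq u (fst s, snd s, e) /\ is_tri (fst s, snd s, e).
Proof.
  destruct u as [[x y] z]; unfold is_tri, side_of, in_tri; simpl.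
  intros (Vx & Vy & Vz & Dxy & Dyz & Dxz) (S1 & S2 & S3).
  pose proof (dist_sym x y); pose proof (dist_sym y z); pose proof (dist_sym x z).
  destruct S1 as [E1 | [E1 | E1]], S2 as [E2 | [E2 | E2]]; rewrite E1, E2 in *;
    try congruence;
    [exists z | exists y | exists z | exists x | exists y | exists x];
    (split; [apply tri_eq_intro; unfold in_tri; auto |]);
    (split; [| split; [| split]]); auto; repeat split; congruence.
Qed.

Lemma side_farey s t : is_tri t -> side_of s t -> farey_edge s.
Proof.
  intros V S; destruct (side_apex s t V S) as (e & _ & V1 & V2 & _ & D & _).
  unfold farey_edge; auto.
Qed.

Lemma adjacent_tri_eq t t' u : tri_eq t t' -> is_tri t -> adjacent t' u -> adjacent t u.
Proof.
  intros E V (V' & Vu & NE & s & S1 & S2); repeat split; auto.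
  - intro E'; apply NE; eapply tri_eq_trans; [apply tri_eq_sym; exact E | exact E'].
  - exists s; split; auto; eapply side_of_tri_eq; [exact S1 | apply tri_eq_sym; auto].
Qed.

Lemma H_verts_in_tri x t : H_verts x t -> in_tri x t.
Proof. intros (_ & s & (S1 & S2 & _) & [E | E]); rewrite <- E; auto. Qed.

(* [w0] and [w1] are the apexes, up to sign, of the two triangles on the Farey edge [a, b]. *)
Definition flip_pair (a b w0 w1 : Z * Z) : Prop :=
  unimodular a b /\
  ((eq_pm w0 (vadd a b) /\ eq_pm w1 (vsub a b)) \/ (eq_pm w0 (vsub a b) /\ eq_pm w1 (vadd a b))).

Definition mtri : Type := ((Z * Z) * (Z * Z) * (Z * Z))%type.

(* Componentwise rather than [=], so that [lia] can use it. *)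
Definition veq (u v : Z * Z) : Prop := fst u = fst v /\ snd u = snd v.

Definition in_mtri (v : Z * Z) (M : mtri) : Prop :=
  let '(a, b, e) := M in veq v a \/ veq v b \/ veq v e.

Definition in_mtri_pm (v : Z * Z) (M : mtri) : Prop :=
  let '(a, b, e) := M in eq_pm v a \/ eq_pm v b \/ eq_pm v e.

Definition incl_mtri_pm (M M' : mtri) : Prop :=
  let '(a, b, e) := M in in_mtri_pm a M' /\ in_mtri_pm b M' /\ in_mtri_pm e M'.

Definition unimodular_mtri (M : mtri) : Prop :=
  let '(a, b, e) := M in unimodular a b /\ unimodular b e /\ unimodular a e.

Definition tri_of (f g : Z * Z) (M : mtri) : tri :=
  let '(a, b, e) := M in (vtx f g a, vtx f g b, vtx f g e).

Lemma veq_eq u v : veq u v -> u = v.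
Proof. destruct u, v; unfold veq; simpl; intros [-> ->]; reflexivity. Qed.

Lemma in_mtri_pmP v M : in_mtri_pm v M -> exists v', in_mtri v' M /\ eq_pm v v'.
Proof.
  destruct M as [[a b] e]; unfold in_mtri, veq; intros [P | [P | P]]; eauto 7.
Qed.

Definition vc : Z * Z := (0, 1).
Definition vx (k : Z) : Z * Z := (1, k).
Definition vy (i : Z) : Z * Z := (2, 2 * i + 1).
Definition vz (i : Z) : Z * Z := (3, 3 * i + 1).
Definition vw (i : Z) : Z * Z := (3, 3 * i + 2).
Definition vs1 (i : Z) : Z * Z := (4, 4 * i + 1).
Definition vs2 (i : Z) : Z * Z := (5, 5 * i + 2).
Definition vs3 (i : Z) : Z * Z := (5, 5 * i + 3).
Definition vs4 (i : Z) : Z * Z := (4, 4 * i + 3).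

(* [tP i] is the i-th triangle of the path, [tQ i] is glued to it along [vx i, vx (i+1)],
   [tR i] and [tR' i] are glued to [tQ i] along [vx i, vy i] and [vx (i+1), vy i], and
   [tS1 i], [tS2 i] (resp. [tS3 i], [tS4 i]) to [tR i] (resp. [tR' i]).  Each new apex is
   the sum of the two ends of the side it is glued along. *)
Definition tP (i : Z) : mtri := (vx i, vc, vx (i + 1)).
Definition tQ (i : Z) : mtri := (vx i, vx (i + 1), vy i).
Definition tR (i : Z) : mtri := (vx i, vy i, vz i).
Definition tR' (i : Z) : mtri := (vx (i + 1), vy i, vw i).
Definition tS1 (i : Z) : mtri := (vx i, vz i, vs1 i).
Definition tS2 (i : Z) : mtri := (vy i, vz i, vs2 i).
Definition tS3 (i : Z) : mtri := (vy i, vw i, vs3 i).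
Definition tS4 (i : Z) : mtri := (vx (i + 1), vw i, vs4 i).

Ltac model_arith :=
  unfold tP, tQ, tR, tR', tS1, tS2, tS3, tS4, vc, vx, vy, vz, vw, vs1, vs2, vs3, vs4,
    flip_pair, unimodular_mtri, incl_mtri_pm, in_mtri, in_mtri_pm, veq, eq_pm, nonzero,
    vadd, vsub, unimodular, det in *;
  cbn [fst snd] in *; lia.

Definition chain f g (M0 M1 M2 M3 : mtri) : Prop :=
  adjacent (tri_of f g M0) (tri_of f g M1) /\ adjacent (tri_of f g M1) (tri_of f g M2) /\
  adjacent (tri_of f g M2) (tri_of f g M3) /\
  ~ tri_eq (tri_of f g M0) (tri_of f g M2) /\ ~ tri_eq (tri_of f g M0) (tri_of f g M3) /\
  ~ tri_eq (tri_of f g M1) (tri_of f g M3).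

Section Farey.

Variables f g : Z * Z.
Hypothesis Hfg : unimodular f g.

Lemma flip a b w0 w1 t u s : flip_pair a b w0 w1 ->
  tri_eq t (vtx f g a, vtx f g b, vtx f g w0) -> is_tri u -> ~ tri_eq t u -> side_of s u ->
  joins s (vtx f g a) (vtx f g b) -> tri_eq u (vtx f g a, vtx f g b, vtx f g w1).
Proof.
  intros [Hab W] Ht Vu NE Su J.
  destruct (side_apex s u Vu Su) as (e & Ue & _ & _ & Ve & _ & D1 & D2).
  assert (Ue' : tri_eq u (vtx f g a, vtx f g b, e) /\
                dist (vtx f g a) e = 1 /\ dist (vtx f g b) e = 1).
  { destruct J as [[E1 E2] | [E1 E2]]; rewrite E1, E2 in *;
      (split; [eapply tri_eq_trans; [exact Ue | apply tri_eq_intro; unfold in_tri; auto] | auto]);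
      rewrite dist_sym in D2; auto. }
  destruct Ue' as (Ue2 & D1' & D2').
  destruct (farey_apex f g Hfg a b e Hab Ve D1' D2') as (w & -> & Hw).
  assert (N : nonzero w0 /\ nonzero w1).
  { destruct W as [[P0 P1] | [P0 P1]]; destruct a, b, w0, w1;
      unfold unimodular, nonzero, det, eq_pm, vadd, vsub in *; simpl in *; nia. }
  assert (C : eq_pm w w0 \/ eq_pm w w1).
  { destruct W as [[P0 P1] | [P0 P1]], Hw as [Hw | Hw];
      [left | right | right | left]; eapply eq_pm_trans; eauto using eq_pm_sym. }
  destruct C as [C | C].
  - exfalso; apply NE; rewrite (vtx_eq_pm f g Hfg w w0 C (proj1 N)) in Ue2.
    eapply tri_eq_trans; [exact Ht | apply tri_eq_sym; auto].
  - rewrite (vtx_eq_pm f g Hfg w w1 C (proj2 N)) in Ue2; exact Ue2.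
Qed.

Lemma adjacent_cases a b c wab wac wbc t u s :
  flip_pair a b c wab -> flip_pair a c b wac -> flip_pair b c a wbc ->
  tri_eq t (vtx f g a, vtx f g b, vtx f g c) -> adjacent t u -> side_of s t -> side_of s u ->
  (joins s (vtx f g a) (vtx f g b) /\ tri_eq u (vtx f g a, vtx f g b, vtx f g wab)) \/
  (joins s (vtx f g a) (vtx f g c) /\ tri_eq u (vtx f g a, vtx f g c, vtx f g wac)) \/
  (joins s (vtx f g b) (vtx f g c) /\ tri_eq u (vtx f g b, vtx f g c, vtx f g wbc)).
Proof.
  intros Fab Fac Fbc Ht (Vt & Vu & NE & _) St Su.
  pose proof St as (S1 & S2 & S3); apply Ht in S1, S2.
  assert (Tac : tri_eq t (vtx f g a, vtx f g c, vtx f g b)).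
  { eapply tri_eq_trans; [exact Ht | apply tri_eq_intro; unfold in_tri; auto]. }
  assert (Tbc : tri_eq t (vtx f g b, vtx f g c, vtx f g a)).
  { eapply tri_eq_trans; [exact Ht | apply tri_eq_intro; unfold in_tri; auto]. }
  destruct S1 as [E1 | [E1 | E1]], S2 as [E2 | [E2 | E2]]; try congruence;
    [left | right; left | left | right; right | right; left | right; right];
    (split; [unfold joins; auto | eapply flip; eauto; unfold joins; auto]).
Qed.

Lemma in_tri_of v M : in_mtri v M -> in_tri (vtx f g v) (tri_of f g M).
Proof.
  destruct M as [[a b] e]; simpl.
  intros [E | [E | E]]; apply veq_eq in E; subst; auto.
Qed.

Lemma in_tri_ofP x M : in_tri x (tri_of f g M) -> exists v, in_mtri v M /\ x = vtx f g v.
Proof.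
  destruct M as [[a b] e]; simpl; unfold veq.
  intros [-> | [-> | ->]]; eauto 7.
Qed.

Lemma in_tri_of_vtx u M : in_tri (vtx f g u) (tri_of f g M) -> in_mtri_pm u M.
Proof.
  destruct M as [[a b] e]; simpl.
  intros [E | [E | E]]; apply (vtx_inj f g Hfg) in E; auto.
Qed.

Lemma is_tri_of M : unimodular_mtri M -> is_tri (tri_of f g M).
Proof.
  destruct M as [[a b] e]; simpl; intros (Hab & Hbe & Hae).
  assert (Hea : unimodular e a).
  { unfold unimodular, det in *; rewrite <- Z.abs_opp, <- Hae; f_equal; ring. }
  unfold is_tri; rewrite !(dist_vtx f g Hfg).
  exact (conj (is_vertex_vtx f g Hfg a b Hab) (conj (is_vertex_vtx f g Hfg b e Hbe)
    (conj (is_vertex_vtx f g Hfg e a Hea) (conj Hab (conj Hbe Hae))))).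
Qed.

Lemma tri_eq_tri_of a b e a' b' e' :
  in_mtri a (a', b', e') -> in_mtri b (a', b', e') -> in_mtri e (a', b', e') ->
  in_mtri a' (a, b, e) -> in_mtri b' (a, b, e) -> in_mtri e' (a, b, e) ->
  tri_eq (tri_of f g (a, b, e)) (tri_of f g (a', b', e')).
Proof. intros; apply tri_eq_intro; apply (in_tri_of _ (_, _, _)); auto. Qed.

Lemma not_tri_eq_tri_of M M' : ~ incl_mtri_pm M M' -> ~ tri_eq (tri_of f g M) (tri_of f g M').
Proof.
  intros N E; apply N; destruct M as [[a b] e].
  repeat split; apply in_tri_of_vtx, E, (in_tri_of _ (_, _, _)); unfold in_mtri, veq; auto.
Qed.

Lemma side_of_tri_ofP s M : side_of s (tri_of f g M) ->
  exists a b, in_mtri a M /\ in_mtri b M /\ fst s = vtx f g a /\ snd s = vtx f g b.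
Proof.
  intros (S1 & S2 & _).
  destruct (in_tri_ofP _ _ S1) as (a & Ia & Ea), (in_tri_ofP _ _ S2) as (b & Ib & Eb).
  exists a, b; auto.
Qed.

Lemma side_of_tri_of_ends s M v : side_of s (tri_of f g M) ->
  (vtx f g v = fst s \/ vtx f g v = snd s) -> in_mtri_pm v M.
Proof.
  intros (S1 & S2 & _) [E | E]; apply in_tri_of_vtx; rewrite E; assumption.
Qed.

Lemma side_of_tri_of s a b M : joins s (vtx f g a) (vtx f g b) ->
  in_mtri a M -> in_mtri b M -> ~ eq_pm a b -> side_of s (tri_of f g M).
Proof.
  intros J Ia Ib N; apply (side_of_joins s (vtx f g a) (vtx f g b)); auto using in_tri_of.
  intro E; apply N, (vtx_inj f g Hfg); exact E.
Qed.

Lemma adjacent_tri_of M M' a b : unimodular_mtri M -> unimodular_mtri M' ->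
  in_mtri a M -> in_mtri b M -> in_mtri a M' -> in_mtri b M' -> ~ eq_pm a b ->
  ~ incl_mtri_pm M M' -> adjacent (tri_of f g M) (tri_of f g M').
Proof.
  intros UM UM' Ia Ib Ia' Ib' N D.
  split; [apply is_tri_of; auto |]; split; [apply is_tri_of; auto |].
  split; [apply not_tri_eq_tri_of; auto |].
  exists (vtx f g a, vtx f g b); split; apply (side_of_tri_of _ a b); auto; left; auto.
Qed.

Lemma tP_next k t u s : tri_eq t (tri_of f g (tP k)) -> adjacent t u ->
  side_of s t -> side_of s u -> has_endpoint (vtx f g vc) s ->
  tri_eq u (tri_of f g (tP (k - 1))) \/ tri_eq u (tri_of f g (tP (k + 1))).
Proof.
  intros Ht A St Su Hc.
  destruct (adjacent_cases (vx k) vc (vx (k + 1)) (vx (k - 1)) (vy k) (vx (k + 2)) t u s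
              ltac:(model_arith) ltac:(model_arith) ltac:(model_arith) Ht A St Su)
    as [[_ U] | [[J _] | [_ U]]].
  - left; eapply tri_eq_trans; [exact U | apply tri_eq_tri_of; model_arith].
  - exfalso; destruct Hc as [E | E], J as [[E1 E2] | [E1 E2]]; rewrite E in *;
      apply (vtx_inj f g Hfg) in E1 || apply (vtx_inj f g Hfg) in E2; model_arith.
  - right; eapply tri_eq_trans; [exact U | apply tri_eq_tri_of; model_arith].
Qed.

Lemma tQ_next I t u s : tri_eq t (tri_of f g (tQ I)) -> adjacent t u ->
  side_of s t -> side_of s u -> ~ tri_eq (tri_of f g (tP I)) u ->
  tri_eq u (tri_of f g (tR I)) \/ tri_eq u (tri_of f g (tR' I)).
Proof.
  intros Ht A St Su N.
  destruct (adjacent_cases (vx I) (vx (I + 1)) (vy I) vc (vz I) (vw I) t u s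
              ltac:(model_arith) ltac:(model_arith) ltac:(model_arith) Ht A St Su)
    as [[_ U] | [[_ U] | [_ U]]]; auto.
  exfalso; apply N, tri_eq_sym; eapply tri_eq_trans; [exact U |].
  apply tri_eq_tri_of; model_arith.
Qed.

Lemma tR_next I t u s : tri_eq t (tri_of f g (tR I)) -> adjacent t u ->
  side_of s t -> side_of s u -> ~ tri_eq (tri_of f g (tQ I)) u ->
  tri_eq u (tri_of f g (tS1 I)) \/ tri_eq u (tri_of f g (tS2 I)).
Proof.
  intros Ht A St Su N.
  destruct (adjacent_cases (vx I) (vy I) (vz I) (vx (I + 1)) (vs1 I) (vs2 I) t u s
              ltac:(model_arith) ltac:(model_arith) ltac:(model_arith) Ht A St Su)
    as [[_ U] | [[_ U] | [_ U]]]; auto.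
  exfalso; apply N, tri_eq_sym; eapply tri_eq_trans; [exact U |].
  apply tri_eq_tri_of; model_arith.
Qed.

Lemma tR'_next I t u s : tri_eq t (tri_of f g (tR' I)) -> adjacent t u ->
  side_of s t -> side_of s u -> ~ tri_eq (tri_of f g (tQ I)) u ->
  tri_eq u (tri_of f g (tS3 I)) \/ tri_eq u (tri_of f g (tS4 I)).
Proof.
  intros Ht A St Su N.
  destruct (adjacent_cases (vx (I + 1)) (vy I) (vw I) (vx I) (vs4 I) (vs3 I) t u s
              ltac:(model_arith) ltac:(model_arith) ltac:(model_arith) Ht A St Su)
    as [[_ U] | [[_ U] | [_ U]]]; auto.
  exfalso; apply N, tri_eq_sym; eapply tri_eq_trans; [exact U |].
  apply tri_eq_tri_of; model_arith.
Qed.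

Ltac chain_by a b c d :=
  split; [apply (adjacent_tri_of _ _ a b); model_arith |];
  split; [apply (adjacent_tri_of _ _ a c); model_arith |];
  split; [apply (adjacent_tri_of _ _ a d); model_arith |];
  repeat split; apply not_tri_eq_tri_of; model_arith.

Lemma chain_R i : chain f g (tP i) (tQ i) (tR i) (tS1 i).
Proof. chain_by (vx i) (vx (i + 1)) (vy i) (vz i). Qed.

Lemma chain_R' i : chain f g (tP i) (tQ i) (tR' i) (tS4 i).
Proof. chain_by (vx (i + 1)) (vx i) (vy i) (vw i). Qed.

End Farey.

Lemma at_most_two_on_side s t1 t2 t3 : is_tri t1 -> is_tri t2 -> is_tri t3 ->
  side_of s t1 -> side_of s t2 -> side_of s t3 ->
  tri_eq t1 t2 \/ tri_eq t1 t3 \/ tri_eq t2 t3.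
Proof.
  intros V1 V2 V3 S1 S2 S3.
  pose (e1 := (1, 0) : Z * Z); pose (e2 := (0, 1) : Z * Z).
  assert (Hid : unimodular e1 e2) by reflexivity.
  destruct (side_apex s t1 V1 S1) as (e & U1 & Va & Vb & Ve & Dab & D2 & D1).
  destruct (vtx_surj _ _ Hid _ Va) as [a Ea], (vtx_surj _ _ Hid _ Vb) as [b Eb].
  rewrite Ea, Eb in *.
  assert (Hab : unimodular a b) by (unfold unimodular; rewrite <- (dist_vtx e1 e2); auto).
  destruct (farey_apex _ _ Hid a b e Hab Ve D1 D2) as (w0 & -> & W).
  assert (F : exists w1, flip_pair a b w0 w1).
  { destruct W; [exists (vsub a b) | exists (vadd a b)]; split; auto; unfold eq_pm in *; lia. }
  destruct F as [w1 F].
  destruct (classic (tri_eq t1 t2)) as [| N2]; [auto |].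
  destruct (classic (tri_eq t1 t3)) as [| N3]; [auto |].
  right; right.
  assert (J : joins s (vtx e1 e2 a) (vtx e1 e2 b)) by (left; auto).
  apply (tri_eq_trans _ (vtx e1 e2 a, vtx e1 e2 b, vtx e1 e2 w1)); [| apply tri_eq_sym];
    eapply flip; eauto.
Qed.

(** * Normal form of the path *)

Lemma frame_of_tri c w e : is_tri (c, w, e) ->
  exists g, unimodular e g /\ vtx e g vc = c /\ vtx e g (vx 0) = e /\ vtx e g (vx 1) = w.
Proof.
  intros (Vc & Vw & Ve & Dcw & Dwe & Dce).
  assert (Hec : unimodular e c) by (unfold unimodular; rewrite <- Dce; apply dist_sym).
  assert (G : exists g, eq_pm g c /\ eq_pm w (vadd e g)).
  { destruct (apex_unimodular e c w Hec) as [W | W].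
    - unfold unimodular; rewrite <- Dwe; apply dist_sym.
    - exact Dcw.
    - exists c; split; [unfold eq_pm |]; auto.
    - exists (- fst c, - snd c); unfold eq_pm, vsub, vadd in *; simpl in *; lia. }
  destruct G as (g & Gc & Gw); exists g; unfold vtx.
  assert (Cvc : comb e g vc = g)
    by (destruct g; unfold comb, vc; cbn [fst snd]; f_equal; ring).
  assert (Cx0 : comb e g (vx 0) = e)
    by (destruct e; unfold comb, vx; cbn [fst snd]; f_equal; ring).
  assert (Cx1 : comb e g (vx 1) = vadd e g)
    by (unfold comb, vx, vadd; cbn [fst snd]; f_equal; ring).
  rewrite Cvc, Cx0, Cx1, (canon_vertex e Ve).
  repeat split.
  - unfold unimodular, eq_pm, det in *; destruct Gc as [[-> ->] | [-> ->]]; [exact Hec |].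
    rewrite <- Hec, <- Z.abs_opp; f_equal; ring.
  - rewrite <- (canon_vertex c Vc); apply canon_eq_pm; auto using is_vertex_nonzero.
  - rewrite <- (canon_vertex w Vw); apply canon_eq_pm; auto using eq_pm_sym, is_vertex_nonzero.
Qed.

Lemma path_in_frame f g c p m : unimodular f g -> vtx f g vc = c ->
  embedded_path_in_H c p m -> tri_eq (p 0%nat) (tri_of f g (tP 0)) ->
  in_tri (vtx f g (vx 1)) (p 1%nat) ->
  forall i, (i <= m)%nat -> tri_eq (p i) (tri_of f g (tP (Z.of_nat i))).
Proof.
  intros Hfg Hc (_ & Step & Emb) P0 X1.
  enough (IH : forall i, (i <= m)%nat -> forall j, (j <= i)%nat ->
            tri_eq (p j) (tri_of f g (tP (Z.of_nat j)))) by (intros i Hi; apply (IH i); lia).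
  induction i as [| i IH]; intros Hi j Hj.
  { replace j with 0%nat by lia; exact P0. }
  destruct (Nat.eq_dec j (S i)) as [-> |]; [| apply IH; lia].
  destruct (Step i ltac:(lia)) as (A & s & Si & Si1 & Hs); rewrite <- Hc in Hs.
  destruct (tP_next f g Hfg _ _ _ s (IH ltac:(lia) i ltac:(lia)) A Si Si1 Hs) as [U | U].
  - exfalso; destruct i as [| i].
    + apply U in X1; simpl in X1.
      destruct X1 as [E | [E | E]]; apply vtx_inj in E; auto; model_arith.
    + apply (Emb i (S (S i)) ltac:(lia)).
      eapply tri_eq_trans; [apply (IH ltac:(lia) i ltac:(lia)) |].
      eapply tri_eq_trans; [| apply tri_eq_sym, U]; apply tri_eq_tri_of; model_arith.
  - eapply tri_eq_trans; [exact U |]; apply tri_eq_tri_of; model_arith.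
Qed.

Lemma path_model c p m : (1 <= m)%nat -> embedded_path_in_H c p m ->
  exists f g, unimodular f g /\
    forall i, (i <= m)%nat -> tri_eq (p i) (tri_of f g (tP (Z.of_nat i))).
Proof.
  intros Hm Hemb; pose proof Hemb as (Tri & Step & _).
  destruct (Step 0%nat ltac:(lia)) as (_ & s & S0 & S1 & Hc).
  destruct (side_apex s (p 0%nat) (Tri 0%nat ltac:(lia)) S0) as (e & U & V).
  assert (W : exists w, tri_eq (p 0%nat) (c, w, e) /\ is_tri (c, w, e) /\ in_tri w (p 1%nat)).
  { destruct S1 as (T1 & T2 & _), V as (V1 & V2 & Ve & D12 & D2e & D1e).
    destruct Hc as [E | E]; rewrite E in *.
    - exists (snd s); split; [exact U | split; [| exact T2]].
      exact (conj V1 (conj V2 (conj Ve (conj D12 (conj D2e D1e))))).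
    - exists (fst s); split; [| split; [| exact T1]].
      + eapply tri_eq_trans; [exact U | apply tri_eq_intro; unfold in_tri; auto].
      + rewrite dist_sym in D12.
        exact (conj V2 (conj V1 (conj Ve (conj D12 (conj D1e D2e))))). }
  destruct W as (w & Uw & Vw & W1).
  destruct (frame_of_tri c w e Vw) as (g & Hfg & Ec & Ee & Ew).
  exists e, g; split; [exact Hfg |].
  apply (path_in_frame e g c p m Hfg Ec Hemb); [| rewrite Ew; exact W1].
  eapply tri_eq_trans; [exact Uw |]; unfold tP; simpl; rewrite Ec, Ee, Ew.
  apply tri_eq_intro; unfold in_tri; auto.
Qed.

(** * The branches [B_r] *)

Lemma in_consecutive_tP v j : in_mtri_pm v (tP j) -> in_mtri_pm v (tP (j + 1)) ->
  eq_pm v vc \/ eq_pm v (vx (j + 1)).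
Proof. destruct v; model_arith. Qed.

(* The pairs of model triangles glued along an edge of [B_r(v_I)]. *)
Definition branch_edge (I : Z) (r : nat) (M1 M2 : mtri) : Prop :=
  (M1 = tP I /\ M2 = tQ I) \/
  ((2 <= r)%nat /\ M1 = tQ I /\ (M2 = tR I \/ M2 = tR' I)) \/
  ((3 <= r)%nat /\ ((M1 = tR I /\ (M2 = tS1 I \/ M2 = tS2 I)) \/
                    (M1 = tR' I /\ (M2 = tS3 I \/ M2 = tS4 I)))).

Section PathFrame.

Variables (f g : Z * Z) (p : nat -> tri) (m : nat).
Hypothesis Hfg : unimodular f g.
Hypothesis Htri : forall j, (j <= m)%nat -> is_tri (p j).
Hypothesis Hpath : forall j, (j <= m)%nat -> tri_eq (p j) (tri_of f g (tP (Z.of_nat j))).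

Lemma path_edgesP s : path_edges p m s <-> exists j, (j < m)%nat /\
  side_of s (tri_of f g (tP (Z.of_nat j))) /\ side_of s (tri_of f g (tP (Z.of_nat j + 1))).
Proof.
  split; intros (j & Hj & S1 & S2); exists j; split; auto;
    replace (Z.of_nat j + 1) with (Z.of_nat (S j)) in * by lia;
    [split; [apply (side_of_tri_eq s (p j)) | apply (side_of_tri_eq s (p (S j)))]
    | split; [apply (side_of_tri_eq s (tri_of f g (tP (Z.of_nat j))))
             | apply (side_of_tri_eq s (tri_of f g (tP (Z.of_nat (S j)))))]];
    auto; first [apply Hpath; lia | apply tri_eq_sym, Hpath; lia].
Qed.

Lemma not_path_edge_PQ i s : side_of s (tri_of f g (tQ i)) -> ~ path_edges p m s.
Proof.
  intros SQ (j & _ & S1 & S2)%path_edgesP.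
  destruct (side_of_tri_ofP f g s _ SQ) as (a & b & Ia & Ib & Ea & Eb).
  assert (Ja := in_consecutive_tP a _ (side_of_tri_of_ends f g Hfg s _ a S1 (or_introl (eq_sym Ea)))
                  (side_of_tri_of_ends f g Hfg s _ a S2 (or_introl (eq_sym Ea)))).
  assert (Jb := in_consecutive_tP b _ (side_of_tri_of_ends f g Hfg s _ b S1 (or_intror (eq_sym Eb)))
                  (side_of_tri_of_ends f g Hfg s _ b S2 (or_intror (eq_sym Eb)))).
  destruct SQ as (_ & _ & NE); apply NE; rewrite Ea, Eb.
  apply vtx_eq_pm; auto; destruct a, b; model_arith.
Qed.

Lemma B_intro i r k M2 M3 s : (1 <= i < m)%nat -> (1 <= k <= r)%nat -> (k <= 3)%nat ->
  chain f g (tP (Z.of_nat i)) (tQ (Z.of_nat i)) M2 M3 ->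
  (side_of s (tri_of f g (tP (Z.of_nat i))) /\ side_of s (tri_of f g (tQ (Z.of_nat i)))) \/
  ((2 <= k)%nat /\ side_of s (tri_of f g (tQ (Z.of_nat i))) /\ side_of s (tri_of f g M2)) \/
  ((3 <= k)%nat /\ side_of s (tri_of f g M2) /\ side_of s (tri_of f g M3)) ->
  B p m i r s.
Proof.
  intros Hi Hk Hk3 (A01 & A12 & A23 & N02 & N03 & N13) Hs.
  assert (Pi : tri_eq (p i) (tri_of f g (tP (Z.of_nat i)))) by (apply Hpath; lia).
  assert (NPi : forall t, ~ tri_eq (tri_of f g (tP (Z.of_nat i))) t -> ~ tri_eq (p i) t).
  { intros t N E; apply N; eapply tri_eq_trans; [apply tri_eq_sym, Pi | exact E]. }
  pose proof A01 as (_ & _ & N01 & _); pose proof A12 as (_ & _ & N12 & _);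
    pose proof A23 as (_ & _ & N23 & _).
  exists (fun j => match j with
                   | 0 => p i | 1 => tri_of f g (tQ (Z.of_nat i))
                   | 2 => tri_of f g M2 | _ => tri_of f g M3
                   end)%nat, k.
  split; [exact Hk |]; split; [reflexivity |]; split; [| split; [| split]].
  - intros [| [| [| j]]] Hj; try lia; auto.
    apply (adjacent_tri_eq _ _ _ Pi); auto; apply Htri; lia.
  - intros [| [| [| j]]] [| [| [| [| j']]]] Hjj; try lia; auto.
  - intros s0 _ S1; exact (not_path_edge_PQ (Z.of_nat i) s0 S1).
  - destruct Hs as [(S1 & S2) | [(K & S1 & S2) | (K & S1 & S2)]];
      [exists 0%nat | exists 1%nat | exists 2%nat]; (split; [lia |]); auto.
    split; auto; apply (side_of_tri_eq _ _ _ S1), tri_eq_sym, Pi.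
Qed.

Lemma B_first_step i t u s : (1 <= i < m)%nat -> tri_eq t (tri_of f g (tP (Z.of_nat i))) ->
  adjacent t u -> side_of s t -> side_of s u -> ~ path_edges p m s ->
  tri_eq u (tri_of f g (tQ (Z.of_nat i))).
Proof.
  intros Hi Ht A St Su N; set (I := Z.of_nat i) in *.
  destruct (adjacent_cases f g Hfg (vx I) vc (vx (I + 1)) (vx (I - 1)) (vy I) (vx (I + 2)) t u s
              ltac:(model_arith) ltac:(model_arith) ltac:(model_arith) Ht A St Su)
    as [[J _] | [[_ U] | [J _]]]; [| exact U |];
    exfalso; apply N, path_edgesP.
  - exists (i - 1)%nat; replace (Z.of_nat (i - 1)) with (I - 1) by lia.
    split; [lia | split; apply (side_of_tri_of f g Hfg s (vx I) vc); auto; model_arith].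
  - exists i; split; [lia | split; apply (side_of_tri_of f g Hfg s vc (vx (I + 1)))];
      auto; model_arith.
Qed.

Lemma B_cases i r s : B p m i r s -> (1 <= i < m)%nat -> (r <= 3)%nat ->
  exists M1 M2, side_of s (tri_of f g M1) /\ side_of s (tri_of f g M2) /\
    branch_edge (Z.of_nat i) r M1 M2.
Proof.
  intros (u & k & Hk & U0 & Adj & Dist & FE & j & Hj & S1 & S2) Hi Hr; set (I := Z.of_nat i) in *.
  assert (Step : forall j, (j < k)%nat -> exists s, side_of s (u j) /\ side_of s (u (S j)))
    by (intros j' Hj'; destruct (Adj j' Hj') as (_ & _ & _ & s' & T & T'); eauto).
  assert (F0 : tri_eq (u 0%nat) (tri_of f g (tP I))) by (rewrite U0; apply Hpath; lia).
  assert (F1 : tri_eq (u 1%nat) (tri_of f g (tQ I))).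
  { destruct (Step 0%nat ltac:(lia)) as (s' & T0 & T1).
    exact (B_first_step i _ _ s' Hi F0 (Adj 0%nat ltac:(lia)) T0 T1 (FE s' T0 T1)). }
  assert (F2 : (2 <= k)%nat ->
     tri_eq (u 2%nat) (tri_of f g (tR I)) \/ tri_eq (u 2%nat) (tri_of f g (tR' I))).
  { intro Hk2; destruct (Step 1%nat ltac:(lia)) as (s' & T1 & T2).
    apply (tQ_next f g Hfg I _ (u 2%nat) s' F1 (Adj 1%nat ltac:(lia)) T1 T2).
    intro E; apply (Dist 0%nat 2%nat ltac:(lia)); eapply tri_eq_trans; [exact F0 | exact E]. }
  assert (F3 : (3 <= k)%nat ->
     (tri_eq (u 2%nat) (tri_of f g (tR I)) /\
        (tri_eq (u 3%nat) (tri_of f g (tS1 I)) \/ tri_eq (u 3%nat) (tri_of f g (tS2 I)))) \/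
     (tri_eq (u 2%nat) (tri_of f g (tR' I)) /\
        (tri_eq (u 3%nat) (tri_of f g (tS3 I)) \/ tri_eq (u 3%nat) (tri_of f g (tS4 I))))).
  { intro Hk3; destruct (Step 2%nat ltac:(lia)) as (s' & T2 & T3).
    assert (N : ~ tri_eq (tri_of f g (tQ I)) (u 3%nat)).
    { intro E; apply (Dist 1%nat 3%nat ltac:(lia)); eapply tri_eq_trans; [exact F1 | exact E]. }
    destruct (F2 ltac:(lia)) as [R | R]; [left | right]; split; auto;
      [apply (tR_next f g Hfg I (u 2%nat) _ s') | apply (tR'_next f g Hfg I (u 2%nat) _ s')];
      auto; apply Adj; lia. }
  destruct j as [| [| [| j]]]; [| | | lia].
  - exists (tP I), (tQ I); split; [| split]; eauto using side_of_tri_eq; left; auto.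
  - destruct (F2 ltac:(lia)) as [R | R]; [exists (tQ I), (tR I) | exists (tQ I), (tR' I)];
      (split; [| split]); eauto using side_of_tri_eq; right; left; split; auto; lia.
  - destruct (F3 ltac:(lia)) as [(R & [Q | Q]) | (R & [Q | Q])];
      [exists (tR I), (tS1 I) | exists (tR I), (tS2 I) | exists (tR' I), (tS3 I)
      | exists (tR' I), (tS4 I)]; (split; [| split]); eauto using side_of_tri_eq;
      right; right; (split; [lia | tauto]).
Qed.

End PathFrame.

Lemma B_mono p m i r r' s : (r <= r')%nat -> B p m i r s -> B p m i r' s.
Proof. intros H (u & k & Hk & Rest); exists u, k; split; [lia | exact Rest]. Qed.

(** * The vertex set of [T_n] *)

(* The vectors [vc], [vx k] (1 <= k <= 7n-1), [vy i] (2n <= i <= 5n-1) and [vz i], [vw i]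
   (3n <= i <= 4n-1), described by their coordinates (see [model_V_cases]). *)
Definition model_V (n : nat) (v : Z * Z) : Prop :=
  (fst v = 0 /\ snd v = 1) \/ (fst v = 1 /\ 1 <= snd v <= 7 * Z.of_nat n - 1) \/
  (fst v = 2 /\ snd v mod 2 = 1 /\ 4 * Z.of_nat n + 1 <= snd v <= 10 * Z.of_nat n - 1) \/
  (fst v = 3 /\ snd v mod 3 <> 0 /\ 9 * Z.of_nat n + 1 <= snd v <= 12 * Z.of_nat n - 1).

Lemma model_V_cases n v : model_V n v ->
  v = vc \/ (exists k, (1 <= k <= 7 * n - 1)%nat /\ v = vx (Z.of_nat k)) \/
  (exists i, (2 * n <= i <= 5 * n - 1)%nat /\ v = vy (Z.of_nat i)) \/
  (exists i, (3 * n <= i <= 4 * n - 1)%nat /\ (v = vz (Z.of_nat i) \/ v = vw (Z.of_nat i))).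
Proof.
  destruct v as [a b]; unfold model_V, vc, vx, vy, vz, vw; cbn [fst snd].
  intros [[-> ->] | [[-> Hb] | [[-> [Hm Hb]] | [-> [Hm Hb]]]]].
  - left; reflexivity.
  - right; left; exists (Z.to_nat b); split; [lia | now rewrite Z2Nat.id by lia].
  - right; right; left; exists (Z.to_nat ((b - 1) / 2)).
    split; [Z.div_mod_to_equations; lia |].
    rewrite Z2Nat.id by (Z.div_mod_to_equations; lia); f_equal; Z.div_mod_to_equations; lia.
  - right; right; right; exists (Z.to_nat (b / 3)).
    split; [Z.div_mod_to_equations; lia |].
    rewrite Z2Nat.id by (Z.div_mod_to_equations; lia).
    assert (b mod 3 = 1 \/ b mod 3 = 2) as [Hb3 | Hb3] by (Z.div_mod_to_equations; lia);
      [left | right]; f_equal; Z.div_mod_to_equations; lia.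
Qed.

Definition model_tri (n : nat) (M : mtri) : Prop := exists I,
  (0 <= I <= 7 * Z.of_nat n - 1 /\ M = tP I) \/
  (1 <= I <= 7 * Z.of_nat n - 2 /\ M = tQ I) \/
  (2 * Z.of_nat n <= I <= 5 * Z.of_nat n - 1 /\ (M = tR I \/ M = tR' I)) \/
  (3 * Z.of_nat n <= I <= 4 * Z.of_nat n - 1 /\
     (M = tS1 I \/ M = tS2 I \/ M = tS3 I \/ M = tS4 I)).

Definition glued (n : nat) (M1 M2 : mtri) : Prop :=
  (forall v v', in_mtri v M1 -> in_mtri v' M2 -> eq_pm v v' -> model_V n v) /\
  model_tri n M1 /\ model_tri n M2 /\ ~ incl_mtri_pm M1 M2.

Ltac unfold_model :=
  unfold model_V, in_mtri, veq, eq_pm, tP, tQ, tR, tR', tS1, tS2, tS3, tS4,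
    vc, vx, vy, vz, vw, vs1, vs2, vs3, vs4 in *; cbn [fst snd] in *.

Ltac shared_vertex_in_V :=
  let I1 := fresh in let I2 := fresh in let P := fresh in
  intros [v1 v2] [w1 w2] I1 I2 P; unfold_model;
  destruct I1 as [[E1 E2] | [[E1 E2] | [E1 E2]]], I2 as [[F1 F2] | [[F1 F2] | [F1 F2]]],
    P as [[P1 P2] | [P1 P2]]; subst v1 w1; try discriminate P1;
  subst v2 w2; Z.div_mod_to_equations; lia.

Ltac model_tri_by I :=
  exists I;
  first [ solve [left; split; [lia | reflexivity]]
        | solve [right; left; split; [lia | reflexivity]]
        | solve [right; right; left; split; [lia | auto]]
        | solve [right; right; right; split; [lia | auto 6]] ].

Lemma glued_tP n J : 0 <= J <= 7 * Z.of_nat n - 2 -> glued n (tP J) (tP (J + 1)).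
Proof.
  intro HJ; split; [shared_vertex_in_V |].
  split; [model_tri_by J | split; [model_tri_by (J + 1) | model_arith]].
Qed.

Lemma glued_branch n I r M1 M2 : 1 <= I <= 7 * Z.of_nat n - 2 ->
  ((2 <= r)%nat -> 2 * Z.of_nat n <= I <= 5 * Z.of_nat n - 1) ->
  ((3 <= r)%nat -> 3 * Z.of_nat n <= I <= 4 * Z.of_nat n - 1) ->
  branch_edge I r M1 M2 -> glued n M1 M2.
Proof.
  intros HI H2 H3 E.
  destruct E as [[-> ->] | [[Hr [-> [-> | ->]]] | [Hr [[-> [-> | ->]] | [-> [-> | ->]]]]]];
    try specialize (H3 ltac:(lia)); try specialize (H2 ltac:(lia));
    (split; [shared_vertex_in_V | split; [model_tri_by I | split; [model_tri_by I | model_arith]]]).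
Qed.

Lemma model_tri_unimodular n M : model_tri n M -> unimodular_mtri M.
Proof.
  intros [I [[_ ->] | [[_ ->] | [[_ [-> | ->]] | [_ [-> | [-> | [-> | ->]]]]]]]]; model_arith.
Qed.

Lemma model_tri_outside_V n M1 M2 v v' : model_tri n M1 -> model_tri n M2 ->
  in_mtri v M1 -> in_mtri v' M2 -> eq_pm v v' -> ~ model_V n v -> M1 = M2.
Proof.
  intros [I H1] [J H2] I1 I2 P NV; destruct v as [v1 v2], v' as [w1 w2].
  destruct H1 as [[B1 ->] | [[B1 ->] | [[B1 [-> | ->]] | [B1 [-> | [-> | [-> | ->]]]]]]];
  destruct H2 as [[B2 ->] | [[B2 ->] | [[B2 [-> | ->]] | [B2 [-> | [-> | [-> | ->]]]]]]];
  unfold_model;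
  destruct I1 as [[E1 E2] | [[E1 E2] | [E1 E2]]], I2 as [[F1 F2] | [[F1 F2] | [F1 F2]]],
    P as [[P1 P2] | [P1 P2]]; subst v1 w1; try discriminate P1;
  subst v2 w2; Z.div_mod_to_equations;
  first [ (assert (I = J) by lia; subst; reflexivity) | (exfalso; lia) ].
Qed.

Lemma T_farey n p s : (forall j, (j <= 7 * n - 1)%nat -> is_tri (p j)) -> T n p s -> farey_edge s.
Proof.
  intros Htri [(i & Hi & S1 & _) | [(i & _ & HB) | [(i & _ & HB) | (i & _ & HB)]]];
    [apply (side_farey s (p i)); auto; apply Htri; lia | ..];
    destruct HB as (u & k & _ & _ & Adj & _ & _ & j & Hj & S1 & _);
    destruct (Adj j Hj) as [V _]; apply (side_farey s (u j)); auto.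
Qed.

Section TreeModel.

Variables (n : nat) (f g : Z * Z) (p : nat -> tri).
Hypothesis Hn : (1 <= n)%nat.
Hypothesis Hfg : unimodular f g.
Hypothesis Htri : forall j, (j <= 7 * n - 1)%nat -> is_tri (p j).
Hypothesis Hpath :
  forall j, (j <= 7 * n - 1)%nat -> tri_eq (p j) (tri_of f g (tP (Z.of_nat j))).

Ltac side_by a b :=
  apply (side_of_tri_of f g Hfg _ a b); [left; split; reflexivity | model_arith ..].

Lemma T_side_cx k : (1 <= k <= 7 * n - 1)%nat -> T n p (vtx f g vc, vtx f g (vx (Z.of_nat k))).
Proof.
  intro Hk; left; apply (path_edgesP f g p _ Hpath); exists (k - 1)%nat.
  replace (Z.of_nat (k - 1)) with (Z.of_nat k - 1) by lia.
  split; [lia | split; side_by vc (vx (Z.of_nat k))].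
Qed.

Lemma T_side_xy i : (2 * n <= i <= 5 * n - 1)%nat ->
  T n p (vtx f g (vx (Z.of_nat i)), vtx f g (vy (Z.of_nat i))).
Proof.
  intro Hi; right.
  assert (Hs : B p (7 * n - 1) i 2 (vtx f g (vx (Z.of_nat i)), vtx f g (vy (Z.of_nat i)))).
  { apply (B_intro f g p _ Hfg Htri Hpath i 2 2 _ _ _ ltac:(lia) ltac:(lia) ltac:(lia)
             (chain_R f g Hfg (Z.of_nat i))).
    right; left; split; [lia | split; side_by (vx (Z.of_nat i)) (vy (Z.of_nat i))]. }
  destruct (Nat.lt_ge_cases i (3 * n)); [| destruct (Nat.lt_ge_cases i (4 * n))].
  - right; left; exists i; split; [unfold J2; lia | exact Hs].
  - right; right; exists i; split; [unfold J3; lia | apply (B_mono _ _ _ 2); auto].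
  - right; left; exists i; split; [unfold J2; lia | exact Hs].
Qed.

Lemma T_side_xz i : (3 * n <= i <= 4 * n - 1)%nat ->
  T n p (vtx f g (vx (Z.of_nat i)), vtx f g (vz (Z.of_nat i))).
Proof.
  intro Hi; right; right; right; exists i; split; [unfold J3; lia |].
  apply (B_intro f g p _ Hfg Htri Hpath i 3 3 _ _ _ ltac:(lia) ltac:(lia) ltac:(lia)
           (chain_R f g Hfg (Z.of_nat i))).
  right; right; split; [lia | split; side_by (vx (Z.of_nat i)) (vz (Z.of_nat i))].
Qed.

Lemma T_side_wx i : (3 * n <= i <= 4 * n - 1)%nat ->
  T n p (vtx f g (vw (Z.of_nat i)), vtx f g (vx (Z.of_nat i + 1))).
Proof.
  intro Hi; right; right; right; exists i; split; [unfold J3; lia |].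
  apply (B_intro f g p _ Hfg Htri Hpath i 3 3 _ _ _ ltac:(lia) ltac:(lia) ltac:(lia)
           (chain_R' f g Hfg (Z.of_nat i))).
  right; right; split; [lia | split; side_by (vw (Z.of_nat i)) (vx (Z.of_nat i + 1))].
Qed.

Lemma model_V_endpoint v : model_V n v -> exists s, T n p s /\ has_endpoint (vtx f g v) s.
Proof.
  intros [-> | [(k & Hk & ->) | [(i & Hi & ->) | (i & Hi & [-> | ->])]]]%model_V_cases.
  - exists (vtx f g vc, vtx f g (vx (Z.of_nat 1))).
    split; [apply T_side_cx; lia | left; reflexivity].
  - exists (vtx f g vc, vtx f g (vx (Z.of_nat k))).
    split; [apply T_side_cx; auto | right; reflexivity].
  - exists (vtx f g (vx (Z.of_nat i)), vtx f g (vy (Z.of_nat i))).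
    split; [apply T_side_xy; auto | right; reflexivity].
  - exists (vtx f g (vx (Z.of_nat i)), vtx f g (vz (Z.of_nat i))).
    split; [apply T_side_xz; auto | right; reflexivity].
  - exists (vtx f g (vw (Z.of_nat i)), vtx f g (vx (Z.of_nat i + 1))).
    split; [apply T_side_wx; auto | left; reflexivity].
Qed.

Lemma T_edge_glued s : T n p s ->
  exists M1 M2, glued n M1 M2 /\ side_of s (tri_of f g M1) /\ side_of s (tri_of f g M2).
Proof.
  intros [(j & Hj & S1 & S2)%(path_edgesP f g p _ Hpath)
         | [(i & HJ & HB) | [(i & HJ & HB) | (i & HJ & HB)]]].
  { exists (tP (Z.of_nat j)), (tP (Z.of_nat j + 1)); split; auto; apply glued_tP; lia. }
  all: unfold J1, J2, J3 in HJ.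
  all: destruct (B_cases f g p _ Hfg Hpath i _ s HB ltac:(lia) ltac:(lia))
         as (M1 & M2 & S1 & S2 & E).
  all: exists M1, M2; split; auto; eapply glued_branch; [| | | exact E]; lia.
Qed.

Lemma T_endpoint_in_V s x : T n p s -> has_endpoint x s ->
  exists v, x = vtx f g v /\ model_V n v.
Proof.
  intros Ts Hx; destruct (T_edge_glued s Ts) as (M1 & M2 & (Common & _) & S1 & S2).
  destruct (side_of_tri_ofP f g s M1 S1) as (a & b & Ia & Ib & Ea & Eb).
  assert (InV : forall v, in_mtri v M1 -> vtx f g v = fst s \/ vtx f g v = snd s -> model_V n v).
  { intros v Iv Ev; destruct (in_mtri_pmP v M2) as (v' & Iv' & P).
    - apply (side_of_tri_of_ends f g Hfg s M2 v S2 Ev).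
    - exact (Common v v' Iv Iv' P). }
  destruct Hx as [<- | <-]; [exists a | exists b]; split; auto; apply InV; auto.
Qed.

Lemma T_vertex_model t : sub_verts (T n p) t ->
  exists M, model_tri n M /\ tri_eq t (tri_of f g M).
Proof.
  intros (Vt & s & St & Ts).
  destruct (T_edge_glued s Ts) as (M1 & M2 & (_ & T1 & T2 & N) & S1 & S2).
  destruct (at_most_two_on_side s t (tri_of f g M1) (tri_of f g M2) Vt
              (is_tri_of f g Hfg M1 (model_tri_unimodular n M1 T1))
              (is_tri_of f g Hfg M2 (model_tri_unimodular n M2 T2)) St S1 S2)
    as [E | [E | E]];
    [exists M1 | exists M2 | exfalso; apply (not_tri_eq_tri_of f g Hfg M1 M2)]; auto.
Qed.

Lemma inter_verts_outside_V x t t' : ~ (exists v, model_V n v /\ x = vtx f g v) ->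
  inter_verts x (T n p) t -> inter_verts x (T n p) t' -> tri_eq t t'.
Proof.
  intros NV (Ht & St) (Ht' & St').
  destruct (T_vertex_model t St) as (M & TM & EM), (T_vertex_model t' St') as (M' & TM' & EM').
  apply H_verts_in_tri, EM in Ht; apply H_verts_in_tri, EM' in Ht'.
  destruct (in_tri_ofP f g x M Ht) as (a & Ia & Ea), (in_tri_ofP f g x M' Ht') as (a' & Ia' & Ea').
  assert (P : eq_pm a a') by (apply (vtx_inj f g Hfg); congruence).
  assert (Ma : ~ model_V n a) by (intro; apply NV; eauto).
  rewrite (model_tri_outside_V n M M' a a' TM TM' Ia Ia' P Ma) in EM.
  eapply tri_eq_trans; [exact EM | apply tri_eq_sym, EM'].
Qed.

Lemma V_of_T_iff x : V_of (T n p) x <-> exists v, model_V n v /\ x = vtx f g v.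
Proof.
  split.
  - intros (Vx & NE & NS); apply NNPP; intro NV.
    assert (NoE : forall s, ~ inter_edges x (T n p) s).
    { intros s ((_ & He) & Ts); apply NV.
      destruct (T_endpoint_in_V s x Ts He) as (v & -> & Mv); eauto. }
    destruct (classic (exists t, inter_verts x (T n p) t)) as [(t & It) | Nt].
    + apply NS; split; [| exact NoE].
      exists t; split; [exact It | intros t' It'; apply (inter_verts_outside_V x); auto].
    + apply NE; split; [intros t It; apply Nt; eauto | exact NoE].
  - intros (v & Mv & ->).
    destruct (model_V_endpoint v Mv) as (s & Ts & He).
    pose proof (T_farey n p s Htri Ts) as Fs.
    assert (IE : inter_edges (vtx f g v) (T n p) s) by (split; [split |]; auto).
    split; [| split; intros (_ & E); apply (E s IE)].
    destruct Fs as (V1 & V2 & _); destruct He as [<- | <-]; auto.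
Qed.

End TreeModel.

(** * Counting *)

Definition model_V_list (n : nat) : list (Z * Z) :=
  vc :: map (fun k => vx (Z.of_nat k)) (seq 1 (7 * n - 1)) ++
  map (fun i => vy (Z.of_nat i)) (seq (2 * n) (3 * n)) ++
  map (fun i => vz (Z.of_nat i)) (seq (3 * n) n) ++
  map (fun i => vw (Z.of_nat i)) (seq (3 * n) n).

Lemma In_model_V_list n v : (1 <= n)%nat -> In v (model_V_list n) <-> model_V n v.
Proof.
  intro Hn; unfold model_V_list; cbn [In]; rewrite !in_app_iff, !in_map_iff; split.
  - intros [<- | [(k & <- & Hk) | [(k & <- & Hk) | [(k & <- & Hk) | (k & <- & Hk)]]]];
      try apply in_seq in Hk; unfold model_V, vc, vx, vy, vz, vw; cbn [fst snd];
      Z.div_mod_to_equations; lia.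
  - intros [-> | [(k & Hk & ->) | [(i & Hi & ->) | (i & Hi & [-> | ->])]]]%model_V_cases;
      [left; reflexivity | right; left | right; right; left | right; right; right; left
      | right; right; right; right]; eexists; (split; [reflexivity | apply in_seq; lia]).
Qed.

Lemma NoDup_model_V_list n : NoDup (model_V_list n).
Proof.
  unfold model_V_list.
  assert (Inj : forall (h : Z -> Z * Z) a len, (forall x y, snd (h x) = snd (h y) -> x = y) ->
            NoDup (map (fun k => h (Z.of_nat k)) (seq a len))).
  { intros h a len Hh; apply NoDup_map_NoDup_ForallPairs; [| apply seq_NoDup].
    intros x y _ _ E; apply (f_equal snd), Hh in E; lia. }
  constructor;
    [| repeat apply NoDup_app;
       try (apply Inj; intros; unfold vx, vy, vz, vw in *; cbn [snd] in *; lia)].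
  { rewrite !in_app_iff, !in_map_iff.
    intros [(k & E & _) | [(k & E & _) | [(k & E & _) | (k & E & _)]]]; discriminate E. }
  all: intros v (k & <- & _)%in_map_iff Hv; rewrite ?in_app_iff, !in_map_iff in Hv.
  all: repeat destruct Hv as [Hv | Hv]; destruct Hv as (k' & E & _);
         unfold vx, vy, vz, vw in E; pose proof (f_equal fst E); pose proof (f_equal snd E);
         cbn [fst snd] in *; lia.
Qed.

Lemma length_model_V_list n : (1 <= n)%nat -> length (model_V_list n) = (12 * n)%nat.
Proof.
  intro Hn; unfold model_V_list; cbn [length].
  rewrite !length_app, !length_map, !length_seq; lia.
Qed.

Lemma model_V_det_bound n v v' : (1 <= n)%nat -> model_V n v -> model_V n v' ->
  Z.abs (det v v') <= 12 * Z.of_nat n - 4.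
Proof.
  intro Hn; destruct v as [a b], v' as [a' b']; unfold model_V, det; cbn [fst snd].
  intros [[-> Hb] | [[-> Hb] | [[-> [_ Hb]] | [-> [_ Hb]]]]]
    [[-> Hb'] | [[-> Hb'] | [[-> [_ Hb']] | [-> [_ Hb']]]]]; lia.
Qed.

Theorem lemma5p8 (n : nat) (c : pt) (p : nat -> tri) :
  (1 <= n)%nat -> is_vertex c -> embedded_path_in_H c p (7 * n - 1) ->
  I_is (T n p) (Z.of_nat (12 * n) - 4) /\ card_is (V_of (T n p)) (12 * n).
Proof.
  (* [c] is a vertex of [p 0] anyway. *)
  intros Hn _ Hemb.
  destruct (path_model c p (7 * n - 1) ltac:(lia) Hemb) as (f & g & Hfg & Hpath).
  assert (HV := V_of_T_iff n f g p Hn Hfg (proj1 Hemb) Hpath).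
  split; [split |].
  - exists (vtx f g (vy (2 * Z.of_nat n))), (vtx f g (vy (5 * Z.of_nat n - 1))).
    rewrite !HV, dist_vtx by exact Hfg.
    split; [| split]; [eexists; split; [| reflexivity] .. |];
      unfold model_V, vy, det; cbn [fst snd]; Z.div_mod_to_equations; lia.
  - intros c1 c2 (v1 & M1 & ->)%HV (v2 & M2 & ->)%HV.
    rewrite dist_vtx by exact Hfg; pose proof (model_V_det_bound n v1 v2 Hn M1 M2); lia.
  - exists (map (vtx f g) (model_V_list n)); split; [| split].
    + apply NoDup_map_NoDup_ForallPairs; [| apply NoDup_model_V_list].
      intros v v' Iv Iv' E%(vtx_inj f g Hfg).
      apply (In_model_V_list n v Hn) in Iv; apply (In_model_V_list n v' Hn) in Iv'.
      destruct v, v'; unfold model_V, eq_pm in *; cbn [fst snd] in *; f_equal; lia.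
    + intro x; rewrite in_map_iff, HV.
      split; intros (v & E & Iv); exists v; split; auto; apply (In_model_V_list n v Hn); auto.
    + rewrite length_map; apply length_model_V_list; exact Hn.
Qed.
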